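(* Assume $p_{X,Y}\ne p_Xp_Y$ (where $p_{X,Y}=p_Xp_{Y|X}$). Let $(X_1,Y_1),(X_2,Y_2)$ be distributed according to $p_{X,Y}$ marginally, and define $p_0=\Pr(Y_1\ne Y_2)$ when $X_1,X_2$ are independent (each $Y_k$ drawn from $p_{Y|X}(\cdot\mid X_k)$ independently), and $p_1=\Pr(Y_1\neq Y_2)$ when $X_1=X_2$ (and $Y_1,Y_2$ are conditionally independent given $X_1$, each with law $p_{Y|X}(\cdot\mid X_1)$). Then $p_1<p_0$. Fix any $\tau$ with $p_1<\tau<p_0$ (not depending on $n$). Let $C_1^{m_n},\dots,C_K^{m_n}$ be the columns of $\mathbf{D}^{(2)}$, and consider the algorithm that, for each $j\in[K-1]$, declares $C_j^{m_n}$ and $C_{j+1}^{m_n}$ to be replicas (noisy copies of the same column of $\mathbf{D}^{(1)}$) if $d_H(C_j^{m_n},C_{j+1}^{m_n})<m_n\tau$ and declares them to come from different columns of $\mathbf{D}^{(1)}$ otherwise. Let $E_j$ be the event that this decision is wrong for the pair $(C_j^{m_n},C_{j+1}^{m_n})$. If $m_n$ grows exponentially in $n$ (i.e. the database growth rate $R=\lim_n \frac1n\log m_n$ satisfies $R>0$), then $$\Pr\Big(\bigcup_{j=1}^{K-1}E_j\Big)\to 0\quad\text{as } n\to\infty.$$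
   Context: $\mathbf{D}^{(1)}$ is an $m_n\times n$ matrix with i.i.d. entries from $p_X$ on a finite set $\mathfrak{X}$; $S^n$ has i.i.d. entries from $p_S$ on $\{0,\dots,s_{\max}\}$; $\boldsymbol{\Theta}_n$ is a uniform permutation of $[m_n]$, independent of everything else. $\mathbf{D}^{(2)}$ is obtained by replacing, in row $i$, the entry at column $j$ by the empty string if $S_j=0$ and by $S_j$ conditionally i.i.d. outputs of the channel $p_{Y|X}$ with input $D^{(1)}_{\boldsymbol{\Theta}_n^{-1}(i),j}$ if $S_j\ge1$ (all noise independent). Hence $\mathbf{D}^{(2)}$ has $K=\sum_j S_j$ columns, and two consecutive columns of $\mathbf{D}^{(2)}$ are replicas if they are noisy copies of the same column of $\mathbf{D}^{(1)}$. $d_H$ denotes Hamming distance between two columns of length $m_n$. *)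

From HB Require Import structures.
From mathcomp Require Import all_boot all_order all_algebra all_fingroup.
From mathcomp Require Import all_classical all_reals all_analysis.
Set Implicit Arguments. Unset Strict Implicit. Unset Printing Implicit Defensive.
Import Order.TTheory GRing.Theory Num.Theory.
Local Open Scope ring_scope.

Definition is_pmf (R : realType) (T : finType) (p : T -> R) : Prop :=
  (forall t, 0 <= p t) /\ \sum_(t : T) p t = 1.

Definition is_channel (R : realType) (X Y : finType) (W : X -> Y -> R) : Prop :=
  forall x, is_pmf (W x).

Definition pY (R : realType) (X Y : finType) (pX : X -> R) (W : X -> Y -> R) (y : Y) : R :=
  \sum_(x : X) pX x * W x y.

Definition p0 (R : realType) (X Y : finType) (pX : X -> R) (W : X -> Y -> R) : R :=
  \sum_(x1 : X) \sum_(x2 : X) \sum_(y1 : Y) \sum_(y2 : Y)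
     (if y1 != y2 then pX x1 * pX x2 * W x1 y1 * W x2 y2 else 0).

Definition p1 (R : realType) (X Y : finType) (pX : X -> R) (W : X -> Y -> R) : R :=
  \sum_(x : X) \sum_(y1 : Y) \sum_(y2 : Y)
     (if y1 != y2 then pX x * W x y1 * W x y2 else 0).

(* Columns of D^(2), in order: the pair (j,k) is the k-th noisy copy
   (k < S_j) of column j of D^(1).  Its length is K = sum_j S_j. *)
Definition d2_cols (n smax : nat) (S : {ffun 'I_n -> 'I_smax.+1})
  : seq ('I_n * 'I_smax) :=
  [seq jk <- [seq (j, k) | j <- enum 'I_n, k <- enum 'I_smax]
     | (nat_of_ord jk.2 < nat_of_ord (S jk.1))%N].

Definition d2_hamming (Y : finType) (m n smax : nat)
  (Yo : {ffun 'I_m * 'I_n * 'I_smax -> Y}) (c c' : 'I_n * 'I_smax) : nat :=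
  #|[pred i : 'I_m | Yo (i, c.1, c.2) != Yo (i, c'.1, c'.2)]|.

Definition pair_error (R : realType) (Y : finType) (m n smax : nat)
  (Yo : {ffun 'I_m * 'I_n * 'I_smax -> Y}) (tau : R) (c c' : 'I_n * 'I_smax) : bool :=
  ((d2_hamming Yo c c')%:R < m%:R * tau) != (c.1 == c'.1).

Definition some_error (R : realType) (Y : finType) (m n smax : nat)
  (S : {ffun 'I_n -> 'I_smax.+1}) (Yo : {ffun 'I_m * 'I_n * 'I_smax -> Y}) (tau : R) : bool :=
  let cs := d2_cols S in
  has (fun cc => pair_error Yo tau cc.1 cc.2) (zip cs (behead cs)).

(* Sample space: D^(1) (i.i.d. p_X entries), S^n (i.i.d. p_S), Theta
   (uniform permutation of the m rows), and the noise Yo: Yo (i,j,k) is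
   the k-th channel output for row i of D^(2), column j of D^(1), with input
   D^(1)_{Theta^{-1}(i), j}; all outputs are conditionally independent.
   Only the outputs with k < S_j are used (they form D^(2)); the remaining
   ones are independent dummy draws that are marginalized out. *)
Definition error_prob (R : realType) (X Y : finType) (pX : X -> R)
  (smax : nat) (pS : 'I_smax.+1 -> R) (W : X -> Y -> R) (m n : nat) (tau : R) : R :=
  \sum_(D1 : {ffun 'I_m * 'I_n -> X})
  \sum_(S : {ffun 'I_n -> 'I_smax.+1})
  \sum_(Th : {perm 'I_m})
  \sum_(Yo : {ffun 'I_m * 'I_n * 'I_smax -> Y})
    (if some_error S Yo tau then
       (\prod_(ij : 'I_m * 'I_n) pX (D1 ij)) *
       (\prod_(j : 'I_n) pS (S j)) *
       (m`!%:R)^-1 *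
       (\prod_(ijk : 'I_m * 'I_n * 'I_smax)
           W (D1 ((Th^-1)%g ijk.1.1, ijk.1.2)) (Yo ijk))
     else 0).

From HB Require Import structures.
From mathcomp Require Import all_boot all_order all_algebra all_fingroup.
From mathcomp Require Import all_classical all_reals all_analysis.
From mathcomp Require Import ring lra.
Import Order.TTheory GRing.Theory Num.Theory numFieldNormedType.Exports.
Local Open Scope classical_set_scope.
Local Open Scope ring_scope.

Set Implicit Arguments. Unset Strict Implicit. Unset Printing Implicit Defensive.

(* Two noisy copies of the same column of D^(1) disagree in a given row with
   probability p1, copies of distinct columns with probability p0, and
   p0 - p1 = sum_y Var_X (W(y|X)), which is positive exactly when X and Y are
   dependent.  The rows are i.i.d. (the row permutation does not matter), so the
   Hamming distance of two columns is a sum of m independent indicators of mean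
   p1 or p0, and Chebyshev's inequality bounds the probability of a wrong
   threshold decision by 1/(m dl^2), where dl is the distance from tau to
   {p1, p0}.  A union bound over the at most (n smax)^2 pairs of columns gives
   (n smax)^2/(m dl^2), which vanishes since m grows exponentially in n. *)

Lemma sum_mul_eq1 (R : pzSemiRingType) (A : finType) (f : A -> R) (y : A) :
  \sum_a f a * (y == a)%:R = f y.
Proof.
rewrite (bigD1 y) //= eqxx mulr1 big1 ?addr0 // => a; rewrite eq_sym.
by move=> /negbTE ->; rewrite mulr0.
Qed.

Section ProductExpectation.
Variables (R : numDomainType) (T A : finType) (q : T -> A -> R).

Definition Eprod (F : {ffun T -> A} -> R) : R :=
  \sum_(w : {ffun T -> A}) (\prod_t q t (w t)) * F w.

Lemma eq_Eprod F G : F =1 G -> Eprod F = Eprod G.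
Proof. by move=> FG; apply: eq_bigr => w _; rewrite FG. Qed.

Lemma Eprod_sum (I : finType) (G : I -> {ffun T -> A} -> R) :
  Eprod (fun w => \sum_i G i w) = \sum_i Eprod (G i).
Proof. by rewrite /Eprod exchange_big; apply: eq_bigr => w _; rewrite mulr_sumr. Qed.

Lemma EprodZ c F : Eprod (fun w => c * F w) = c * Eprod F.
Proof. by rewrite /Eprod mulr_sumr; apply: eq_bigr => w _; rewrite mulrCA. Qed.

Lemma EprodD F G : Eprod (fun w => F w + G w) = Eprod F + Eprod G.
Proof. by rewrite /Eprod -big_split; apply: eq_bigr => w _; rewrite mulrDr. Qed.

Lemma Eprod_prod (g : T -> A -> R) :
  Eprod (fun w => \prod_t g t (w t)) = \prod_t \sum_a q t a * g t a.
Proof. by rewrite bigA_distr_bigA; apply: eq_bigr => w _; rewrite -big_split. Qed.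

Lemma Eprod_reindex (f : T -> T) G : injective f -> (forall t, q (f t) = q t) ->
  Eprod (fun w => G [ffun t => w (f t)]) = Eprod G.
Proof.
move=> f_inj qf; have f_surj := injF_bij f_inj.
rewrite /Eprod [RHS](reindex_inj (h := fun w : {ffun T -> A} => [ffun t => w (f t)])) /=.
  apply: eq_bigr => w _; congr (_ * _).
  by rewrite (reindex_inj f_inj); apply: eq_bigr => t _; rewrite ffunE qf.
move=> w w' /ffunP ww'; apply/ffunP => t; have [g fg gf] := f_surj.
by have := ww' (g t); rewrite !ffunE gf.
Qed.

Hypothesis q_ge0 : forall t a, 0 <= q t a.

Lemma ler_Eprod F G : (forall w, F w <= G w) -> Eprod F <= Eprod G.
Proof. by move=> FG; apply: ler_sum => w _; rewrite ler_wpM2l ?prodr_ge0. Qed.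

Hypothesis q_sum1 : forall t, \sum_a q t a = 1.

Lemma Eprod_indicators (l : seq (T * A)) : uniq (map fst l) ->
  Eprod (fun w => \prod_(p <- l) (w p.1 == p.2)%:R) = \prod_(p <- l) q p.1 p.2.
Proof.
pose g (l : seq (T * A)) (t : T) (a : A) : R :=
  \prod_(p <- l) (if t == p.1 then (a == p.2)%:R else 1).
have -> : (fun w : {ffun T -> A} => \prod_(p <- l) (w p.1 == p.2)%:R) =
          (fun w => \prod_t g l t (w t)).
  apply: funext => w; rewrite /g exchange_big; apply: eq_bigr => p _.
  by rewrite -big_mkcond big_pred1_eq.
rewrite Eprod_prod; elim: l => [|p l IHl] /=.
  by move=> _; rewrite big_nil; apply: big1 => t _; rewrite -[RHS](q_sum1 t);
    apply: eq_bigr => a _; rewrite /g big_nil mulr1.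
case/andP=> p_notin l_uniq; rewrite big_cons -(IHl l_uniq).
have g_p1 a : g l p.1 a = 1.
  rewrite /g big_seq big1 // => p' p'l; case: eqP => // eq_p.
  by case/negP: p_notin; rewrite eq_p map_f.
have g_cons t a : g (p :: l) t a = (if t == p.1 then (a == p.2)%:R else 1) * g l t a.
  by rewrite /g big_cons.
rewrite (bigD1 p.1) //= [in RHS](bigD1 p.1) //=.
under eq_bigr do rewrite g_cons eqxx g_p1 mulr1 eq_sym.
under [in RHS]eq_bigr do rewrite g_p1 mulr1.
rewrite sum_mul_eq1 q_sum1 mul1r; congr (_ * _).
by apply: eq_bigr => t /negbTE tp; apply: eq_bigr => a _; rewrite g_cons tp mul1r.
Qed.

Lemma Eprod_cst c : Eprod (fun _ => c) = c.
Proof.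
transitivity (c * Eprod (fun _ => 1)).
  by rewrite -EprodZ; apply: eq_Eprod => w; rewrite mulr1.
rewrite -[RHS]mulr1; congr (_ * _).
transitivity (\prod_(p <- [::]) q p.1 p.2); last by rewrite big_nil.
by rewrite -Eprod_indicators //; apply: eq_Eprod => w; rewrite big_nil.
Qed.

Lemma Eprod_coord1 s (h : A -> R) :
  Eprod (fun w => h (w s)) = \sum_a q s a * h a.
Proof.
under eq_Eprod do rewrite -[h _]sum_mul_eq1.
rewrite Eprod_sum; apply: eq_bigr => a _; rewrite EprodZ mulrC; congr (_ * _).
transitivity (\prod_(p <- [:: (s, a)]) q p.1 p.2); last by rewrite big_seq1.
by rewrite -Eprod_indicators //; apply: eq_Eprod => w; rewrite big_seq1 eq_sym.
Qed.

Lemma Eprod_coord2 s1 s2 (h : A -> A -> R) : s1 != s2 ->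
  Eprod (fun w => h (w s1) (w s2)) = \sum_a \sum_b q s1 a * q s2 b * h a b.
Proof.
move=> s12.
have expand (w : {ffun T -> A}) : h (w s1) (w s2) =
    \sum_a \sum_b h a b * \prod_(p <- [:: (s1, a); (s2, b)]) (w p.1 == p.2)%:R.
  under eq_bigr do under eq_bigr do rewrite !big_cons big_nil mulr1 /= mulrA.
  under eq_bigr do rewrite (sum_mul_eq1 (fun b => h _ b * _)).
  by rewrite (sum_mul_eq1 (fun a => h a (w s2))).
rewrite (eq_Eprod expand) Eprod_sum; apply: eq_bigr => a _.
rewrite Eprod_sum; apply: eq_bigr => b _.
rewrite EprodZ Eprod_indicators /=; last by rewrite inE s12.
by rewrite !big_cons big_nil mulr1 mulrC.
Qed.

Lemma Eprod_coord4 s1 s2 s3 s4 (h : A -> A -> A -> A -> R) :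
  uniq [:: s1; s2; s3; s4] ->
  Eprod (fun w => h (w s1) (w s2) (w s3) (w s4)) =
  \sum_a \sum_b \sum_c \sum_d q s1 a * q s2 b * q s3 c * q s4 d * h a b c d.
Proof.
move=> s_uniq.
have expand (w : {ffun T -> A}) : h (w s1) (w s2) (w s3) (w s4) =
    \sum_a \sum_b \sum_c \sum_d h a b c d *
      \prod_(p <- [:: (s1, a); (s2, b); (s3, c); (s4, d)]) (w p.1 == p.2)%:R.
  under eq_bigr do under eq_bigr do under eq_bigr do under eq_bigr do
    rewrite !big_cons big_nil mulr1 /= !mulrA.
  under eq_bigr do under eq_bigr do under eq_bigr do
    rewrite (sum_mul_eq1 (fun d => h _ _ _ d * _ * _ * _)).
  under eq_bigr do under eq_bigr do
    rewrite (sum_mul_eq1 (fun c => h _ _ c (w s4) * _ * _)).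
  under eq_bigr do rewrite (sum_mul_eq1 (fun b => h _ b (w s3) (w s4) * _)).
  by rewrite (sum_mul_eq1 (fun a => h a (w s2) (w s3) (w s4))).
rewrite (eq_Eprod expand) Eprod_sum; apply: eq_bigr => a _.
rewrite Eprod_sum; apply: eq_bigr => b _.
rewrite Eprod_sum; apply: eq_bigr => c _.
rewrite Eprod_sum; apply: eq_bigr => d _.
rewrite EprodZ Eprod_indicators //=.
by rewrite !big_cons big_nil mulr1 mulrC !mulrA.
Qed.

Lemma Eprod_coord1_mul s1 s2 (f g : A -> R) : s1 != s2 ->
  Eprod (fun w => f (w s1) * g (w s2)) =
  Eprod (fun w => f (w s1)) * Eprod (fun w => g (w s2)).
Proof.
move=> s12; rewrite (Eprod_coord2 (fun a b => f a * g b)) // !Eprod_coord1 mulr_suml.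
by apply: eq_bigr => a _; rewrite mulr_sumr; apply: eq_bigr => b _; ring.
Qed.

Lemma Eprod_coord2_mul s1 s2 s3 s4 (f g : A -> A -> R) :
  uniq [:: s1; s2; s3; s4] ->
  Eprod (fun w => f (w s1) (w s2) * g (w s3) (w s4)) =
  Eprod (fun w => f (w s1) (w s2)) * Eprod (fun w => g (w s3) (w s4)).
Proof.
move=> s_uniq; have [s12 s34] : s1 != s2 /\ s3 != s4.
  by move: s_uniq; rewrite /= !inE => /and4P[/norP[-> _] _ -> _].
rewrite (Eprod_coord4 (fun a b c d => f a b * g c d)) // !Eprod_coord2 //.
rewrite mulr_suml; apply: eq_bigr => a _; rewrite mulr_suml; apply: eq_bigr => b _.
rewrite mulr_sumr; apply: eq_bigr => c _.
by rewrite mulr_sumr; apply: eq_bigr => d _; ring.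
Qed.
End ProductExpectation.

Section Mismatch.
Variables (R : realType) (X Y : finType) (pX : X -> R) (W : X -> Y -> R).

Definition mismatch x x' : R := \sum_a \sum_b W x a * W x' b * (a != b)%:R.

Lemma p1_mismatch : p1 pX W = \sum_x pX x * mismatch x x.
Proof.
apply: eq_bigr => x _; rewrite mulr_sumr; apply: eq_bigr => a _.
by rewrite mulr_sumr; apply: eq_bigr => b _; case: (a != b); rewrite ?mulr1 ?mulr0 ?mulrA.
Qed.

Lemma p0_mismatch : p0 pX W = \sum_x \sum_x' pX x * pX x' * mismatch x x'.
Proof.
apply: eq_bigr => x _; apply: eq_bigr => x' _; rewrite mulr_sumr.
apply: eq_bigr => a _; rewrite mulr_sumr; apply: eq_bigr => b _.
by case: (a != b); rewrite ?mulr1 ?mulr0 ?mulrA.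
Qed.

Hypothesis W_channel : is_channel W.

Lemma mismatch_channel x x' : mismatch x x' = 1 - \sum_y W x y * W x' y.
Proof.
have [_ Wx1] := W_channel x; have [_ Wx'1] := W_channel x'.
transitivity (\sum_a \sum_b W x a * W x' b -
              \sum_a \sum_b W x a * W x' b * (a == b)%:R).
  rewrite -sumrB; apply: eq_bigr => a _; rewrite -sumrB; apply: eq_bigr => b _.
  by case: (a =P b) => _; rewrite ?mulr1 ?mulr0 ?subr0 ?subrr.
congr (_ - _); last by apply: eq_bigr => a _; exact: sum_mul_eq1.
by under eq_bigr do rewrite -mulr_sumr Wx'1 mulr1.
Qed.

Hypothesis pX_pmf : is_pmf pX.

Lemma p1_ge0 : 0 <= p1 pX W.
Proof.
have [pX_ge0 _] := pX_pmf.
apply: sumr_ge0 => x _; apply: sumr_ge0 => y1 _; apply: sumr_ge0 => y2 _.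
by case: (_ != _); rewrite // !mulr_ge0 //; apply: (proj1 (W_channel x)).
Qed.

Lemma p1_eq : p1 pX W = 1 - \sum_y \sum_x pX x * W x y ^+ 2.
Proof.
have [_ pX1] := pX_pmf.
rewrite p1_mismatch exchange_big -[1 in RHS]pX1 -sumrB; apply: eq_bigr => x _.
by rewrite mismatch_channel mulrBr mulr1 mulr_sumr; under eq_bigr do rewrite expr2.
Qed.

Lemma p0_eq : p0 pX W = 1 - \sum_y pY pX W y ^+ 2.
Proof.
have [_ pX1] := pX_pmf.
rewrite p0_mismatch.
under eq_bigr do under eq_bigr do rewrite mismatch_channel mulrBr mulr1.
under eq_bigr do rewrite sumrB.
rewrite sumrB; congr (_ - _).
  by under eq_bigr do rewrite -mulr_sumr pX1 mulr1.
under [RHS]eq_bigr do rewrite expr2 /pY mulr_suml.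
under [RHS]eq_bigr do under eq_bigr do rewrite mulr_sumr.
rewrite [RHS]exchange_big; apply: eq_bigr => x _.
rewrite [RHS]exchange_big; apply: eq_bigr => x' _.
by rewrite mulr_sumr; apply: eq_bigr => y _; ring.
Qed.

Lemma p0_sub_p1 :
  p0 pX W - p1 pX W = \sum_y \sum_x pX x * (W x y - pY pX W y) ^+ 2.
Proof.
have [_ pX1] := pX_pmf.
rewrite p0_eq p1_eq opprB addrC addrA subrK -sumrB; apply: eq_bigr => y _.
have : pY pX W y = \sum_x pX x * W x y by [].
move: (pY pX W y) => P PE.
transitivity (\sum_x pX x * W x y ^+ 2 - 2%:R * P * (\sum_x pX x * W x y)
              + P ^+ 2 * \sum_x pX x).
  by rewrite pX1 -PE; move: (\sum_x _) => S2; ring.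
by rewrite !mulr_sumr -sumrB -big_split; apply: eq_bigr => x _ /=; ring.
Qed.

Lemma p1_lt_p0 :
  (fun xy : X * Y => pX xy.1 * W xy.1 xy.2) <>
    (fun xy : X * Y => pX xy.1 * pY pX W xy.2) ->
  p1 pX W < p0 pX W.
Proof.
have [pX_ge0 _] := pX_pmf.
have term_ge0 y x : 0 <= pX x * (W x y - pY pX W y) ^+ 2 by rewrite mulr_ge0 ?sqr_ge0.
have row_ge0 y : 0 <= \sum_x pX x * (W x y - pY pX W y) ^+ 2 by exact: sumr_ge0.
move=> dependent; rewrite -subr_gt0 p0_sub_p1 lt_def sumr_ge0 ?andbT //.
apply/negP => /eqP/(psumr_eq0P (fun y _ => row_ge0 y)) all0.
apply: dependent; apply: funext => -[x y] /=.
have /eqP := @psumr_eq0P _ _ _ _ (fun x _ => term_ge0 y x) (all0 y isT) x isT.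
by rewrite mulf_eq0 sqrf_eq0 subr_eq0 => /orP[/eqP->|/eqP->]; rewrite ?mul0r.
Qed.
End Mismatch.

(* Chebyshev's inequality, pointwise: a wrong threshold decision forces the
   statistic [d] to deviate from its mean [M * P] by at least [M * dl]. *)
Lemma threshold_error_le (R : realFieldType) (d M tau dl P : R) (same : bool) :
  0 < M -> 0 < dl -> (if same then P + dl <= tau else tau + dl <= P) ->
  ((d < M * tau) != same)%:R <= ((M * dl) ^+ 2)^-1 * (d - M * P) ^+ 2.
Proof.
move=> M_gt0 dl_gt0 gap; have Mdl_gt0 : 0 < M * dl by rewrite mulr_gt0.
rewrite [X in _ <= X]mulrC ler_pdivlMr ?exprn_gt0 //.
case: same gap; case: ltP => //= dMtau gap; rewrite ?mul0r ?sqr_ge0 // mul1r.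
  have : M * dl <= d - M * P by nra.
  nra.
have : M * dl <= M * P - d by nra.
nra.
Qed.

Section PairStatistics.
Variables (R : realType) (X Y : finType) (pX : X -> R) (W : X -> Y -> R).
Variables (m n smax : nat).

Local Notation data := {ffun 'I_m * 'I_n -> X}.
Local Notation noise := {ffun 'I_m * 'I_n * 'I_smax -> Y}.

Definition noise_law (D : data) (t : 'I_m * 'I_n * 'I_smax) : Y -> R :=
  W (D (t.1.1, t.1.2)).

Definition Ejoint (F : noise -> R) : R :=
  Eprod (fun _ : 'I_m * 'I_n => pX) (fun D => Eprod (noise_law D) F).

Definition row_mismatch (c c' : 'I_n * 'I_smax) (i : 'I_m) (Yo : noise) : R :=
  (Yo (i, c.1, c.2) != Yo (i, c'.1, c'.2))%:R.

Definition mismatch_rate (c c' : 'I_n * 'I_smax) : R :=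
  if c.1 == c'.1 then p1 pX W else p0 pX W.

Hypotheses (pX_pmf : is_pmf pX) (W_channel : is_channel W).

Let pX_ge0 (t : 'I_m * 'I_n) x : 0 <= pX x. Proof. exact: (proj1 pX_pmf). Qed.
Let pX_sum1 (t : 'I_m * 'I_n) : \sum_x pX x = 1. Proof. exact: (proj2 pX_pmf). Qed.
Let noise_ge0 D t y : 0 <= noise_law D t y. Proof. exact: (proj1 (W_channel _)). Qed.
Let noise_sum1 D t : \sum_y noise_law D t y = 1. Proof. exact: (proj2 (W_channel _)). Qed.

Lemma Ejoint_sum (I : finType) (G : I -> noise -> R) :
  Ejoint (fun Yo => \sum_i G i Yo) = \sum_i Ejoint (G i).
Proof. by rewrite /Ejoint -Eprod_sum; apply: eq_Eprod => D; rewrite Eprod_sum. Qed.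

Lemma EjointD F G : Ejoint (fun Yo => F Yo + G Yo) = Ejoint F + Ejoint G.
Proof. by rewrite /Ejoint -EprodD; apply: eq_Eprod => D; rewrite EprodD. Qed.

Lemma EjointZ a F : Ejoint (fun Yo => a * F Yo) = a * Ejoint F.
Proof. by rewrite /Ejoint -EprodZ; apply: eq_Eprod => D; rewrite EprodZ. Qed.

Lemma Ejoint_cst a : Ejoint (fun _ => a) = a.
Proof.
rewrite /Ejoint -[RHS](Eprod_cst pX_sum1); apply: eq_Eprod => D.
exact: Eprod_cst.
Qed.

Lemma ler_Ejoint F G : (forall Yo, F Yo <= G Yo) -> Ejoint F <= Ejoint G.
Proof.
by move=> FG; apply: (ler_Eprod pX_ge0) => D; exact: (ler_Eprod (noise_ge0 D)).
Qed.

Section ColumnPair.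
Variables (c c' : 'I_n * 'I_smax).

Lemma hamming_row_mismatch Yo :
  (d2_hamming Yo c c')%:R = \sum_i row_mismatch c c' i Yo.
Proof.
rewrite /d2_hamming -sum1_card natr_sum big_mkcond /=; apply: eq_bigr => i _.
by rewrite /row_mismatch inE; case: (_ != _).
Qed.

Lemma Edata_mismatch i :
  Eprod (fun _ => pX) (fun D : data => mismatch W (D (i, c.1)) (D (i, c'.1))) =
  mismatch_rate c c'.
Proof.
rewrite /mismatch_rate; case: eqP => [<-|neq].
  by rewrite (Eprod_coord1 pX_sum1 _ (fun x => mismatch W x x)) p1_mismatch.
rewrite (Eprod_coord2 pX_sum1 (fun x x' => mismatch W x x')) ?p0_mismatch //.
by rewrite xpair_eqE eqxx; apply/eqP.
Qed.

Lemma Edata_mismatch_mul i i' : i != i' ->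
  Eprod (fun _ => pX) (fun D : data =>
    mismatch W (D (i, c.1)) (D (i, c'.1)) * mismatch W (D (i', c.1)) (D (i', c'.1))) =
  mismatch_rate c c' ^+ 2.
Proof.
move=> ii'; have := Edata_mismatch i; have := Edata_mismatch i'.
rewrite expr2 /mismatch_rate; case: eqP => [same|neq] Ei' Ei.
  rewrite -same in Ei Ei' *; rewrite -{1}Ei -Ei'.
  by rewrite (Eprod_coord1_mul pX_sum1 (fun x => mismatch W x x) (fun x => mismatch W x x))
    // xpair_eqE (negbTE ii').
rewrite -{1}Ei -Ei' (Eprod_coord2_mul pX_sum1 (mismatch W) (mismatch W)) //.
rewrite /= !inE !xpair_eqE (negbTE ii') !eqxx /= !andbT !orbF.
by rewrite andbb; apply/eqP.
Qed.

Hypothesis cc' : c != c'.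

Let pair_neq : ~~ ((c.1 == c'.1) && (c.2 == c'.2)).
Proof. by case: c c' cc' => ? ? [? ?]. Qed.

Let noise_coords_uniq (i i' : 'I_m) : i != i' ->
  uniq [:: (i, c.1, c.2); (i, c'.1, c'.2); (i', c.1, c.2); (i', c'.1, c'.2)].
Proof.
by move=> ii'; rewrite /= !inE !xpair_eqE (negbTE ii') !eqxx /= !andbT !orbF pair_neq.
Qed.

Lemma Enoise_row_mismatch D i :
  Eprod (noise_law D) (row_mismatch c c' i) = mismatch W (D (i, c.1)) (D (i, c'.1)).
Proof.
by rewrite (Eprod_coord2 (noise_sum1 D) (fun a b => (a != b)%:R)) // !xpair_eqE eqxx.
Qed.

Lemma Enoise_row_mismatch_mul D i i' : i != i' ->
  Eprod (noise_law D) (fun Yo => row_mismatch c c' i Yo * row_mismatch c c' i' Yo) =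
  mismatch W (D (i, c.1)) (D (i, c'.1)) * mismatch W (D (i', c.1)) (D (i', c'.1)).
Proof.
move=> ii'; rewrite (Eprod_coord2_mul (noise_sum1 D) (fun a b => (a != b)%:R)
  (fun a b => (a != b)%:R) (noise_coords_uniq ii')).
by rewrite !Enoise_row_mismatch.
Qed.

Lemma Ejoint_row_mismatch i : Ejoint (row_mismatch c c' i) = mismatch_rate c c'.
Proof.
by rewrite /Ejoint -(Edata_mismatch i); apply: eq_Eprod => D; exact: Enoise_row_mismatch.
Qed.

Lemma Ejoint_row_mismatch_mul i i' :
  Ejoint (fun Yo => row_mismatch c c' i Yo * row_mismatch c c' i' Yo) =
  if i == i' then mismatch_rate c c' else mismatch_rate c c' ^+ 2.
Proof.
case: eqVneq => [<-|ii'].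
  rewrite -(Ejoint_row_mismatch i); congr Ejoint; apply: funext => Yo.
  by rewrite /row_mismatch; case: (_ != _); rewrite ?mulr1 ?mulr0.
rewrite /Ejoint -(Edata_mismatch_mul ii'); apply: eq_Eprod => D.
exact: Enoise_row_mismatch_mul.
Qed.

(* The rows are independent, so the variance of the Hamming distance is [m] times
   that of a single Bernoulli([P]) mismatch indicator. *)
Lemma Ejoint_hamming_dev :
  Ejoint (fun Yo => ((d2_hamming Yo c c')%:R - m%:R * mismatch_rate c c') ^+ 2) =
  m%:R * (mismatch_rate c c' - mismatch_rate c c' ^+ 2).
Proof.
set P := mismatch_rate c c'; pose Z := row_mismatch c c'.
have expand Yo : ((d2_hamming Yo c c')%:R - m%:R * P) ^+ 2 =
    \sum_i \sum_i' (Z i Yo * Z i' Yo + (- P) * Z i Yo + (- P) * Z i' Yo + P ^+ 2).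
  have -> : m%:R * P = \sum_(i < m) P by rewrite sumr_const card_ord mulr_natl.
  rewrite hamming_row_mismatch -sumrB expr2 mulr_suml.
  by apply: eq_bigr => i _; rewrite mulr_sumr; apply: eq_bigr => i' _; ring.
rewrite (congr1 Ejoint (funext expand)) Ejoint_sum.
under eq_bigr do rewrite Ejoint_sum.
under eq_bigr do under eq_bigr do
  rewrite !EjointD !EjointZ Ejoint_cst Ejoint_row_mismatch_mul !Ejoint_row_mismatch.
have -> : m%:R * (P - P ^+ 2) = \sum_(i < m) (P - P ^+ 2).
  by rewrite sumr_const card_ord mulr_natl.
apply: eq_bigr => i _; rewrite -/P (bigD1 i) //= eqxx big1 => [|i' /negbTE].
  by rewrite addr0; ring.
by rewrite eq_sym => ->; ring.
Qed.
End ColumnPair.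

Lemma Ejoint_pair_error c c' tau dl : (0 < m)%N -> 0 < dl ->
  p1 pX W + dl <= tau -> tau + dl <= p0 pX W ->
  Ejoint (fun Yo => (pair_error Yo tau c c')%:R) <= (m%:R * dl ^+ 2)^-1.
Proof.
move=> m_gt0 dl_gt0 p1_tau tau_p0.
have M_gt0 : 0 < m%:R :> R by rewrite ltr0n.
have bound_ge0 : 0 <= (m%:R * dl ^+ 2)^-1 by rewrite invr_ge0 mulr_ge0 ?sqr_ge0 ?ltW.
case: (eqVneq c c') => [<-|cc'].
  suff -> : Ejoint (fun Yo => (pair_error Yo tau c c)%:R) = 0 by [].
  rewrite -(Ejoint_cst 0); congr Ejoint; apply: funext => Yo.
  have tau_gt0 : 0 < tau by have := p1_ge0 W_channel pX_pmf; lra.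
  rewrite /pair_error /d2_hamming eqxx.
  by rewrite (eq_card0 (A := [pred i | _ != _])) => [|i]; rewrite ?inE ?eqxx ?mulr_gt0.
set P := mismatch_rate c c'.
have pointwise (Yo : noise) : (pair_error Yo tau c c')%:R <=
    ((m%:R * dl) ^+ 2)^-1 * ((d2_hamming Yo c c')%:R - m%:R * P) ^+ 2.
  have gap : if c.1 == c'.1 then P + dl <= tau else tau + dl <= P.
    by rewrite /P /mismatch_rate; case: (c.1 == c'.1).
  exact: (threshold_error_le _ M_gt0 dl_gt0 gap).
apply: (le_trans (ler_Ejoint pointwise)); rewrite EjointZ Ejoint_hamming_dev //.
have -> : (m%:R * dl ^+ 2)^-1 = ((m%:R * dl) ^+ 2)^-1 * m%:R.
  by field; rewrite ?gt_eqF.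
by rewrite ler_wpM2l ?invr_ge0 ?sqr_ge0 // ler_piMr ?ler0n //; nra.
Qed.
End PairStatistics.

Lemma some_error_le_sum (R : realType) (Y : finType) (m n smax : nat)
    (S : {ffun 'I_n -> 'I_smax.+1}) (Yo : {ffun 'I_m * 'I_n * 'I_smax -> Y}) (tau : R) :
  (some_error S Yo tau)%:R <=
  \sum_(cc : ('I_n * 'I_smax) * ('I_n * 'I_smax)) (pair_error Yo tau cc.1 cc.2)%:R :> R.
Proof.
have terms_ge0 (P : pred (('I_n * 'I_smax) * ('I_n * 'I_smax))) :
  0 <= \sum_(cc | P cc) (pair_error Yo tau cc.1 cc.2)%:R :> R by exact: sumr_ge0.
case/boolP: (some_error S Yo tau) => [/hasP[cc _ err]|_]; last exact: terms_ge0.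
by rewrite (bigD1 cc) //= err lerDl terms_ge0.
Qed.

Section Model.
Variables (R : realType) (X Y : finType) (pX : X -> R) (smax : nat).
Variables (pS : 'I_smax.+1 -> R) (W : X -> Y -> R) (m n : nat).

Local Notation data := {ffun 'I_m * 'I_n -> X}.
Local Notation reps := {ffun 'I_n -> 'I_smax.+1}.
Local Notation noise := {ffun 'I_m * 'I_n * 'I_smax -> Y}.

Definition model_weight (D1 : data) (S : reps) (Th : {perm 'I_m}) (Yo : noise) : R :=
  (\prod_(ij : 'I_m * 'I_n) pX (D1 ij)) * (\prod_(j : 'I_n) pS (S j)) * (m`!%:R)^-1 *
  (\prod_(ijk : 'I_m * 'I_n * 'I_smax) W (D1 ((Th^-1)%g ijk.1.1, ijk.1.2)) (Yo ijk)).

Definition Emodel (F : noise -> R) : R :=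
  \sum_(D1 : data) \sum_(S : reps) \sum_(Th : {perm 'I_m}) \sum_(Yo : noise)
    model_weight D1 S Th Yo * F Yo.

Hypotheses (pX_pmf : is_pmf pX) (pS_pmf : is_pmf pS) (W_channel : is_channel W).

Lemma model_weight_ge0 D1 S Th Yo : 0 <= model_weight D1 S Th Yo.
Proof.
rewrite !mulr_ge0 ?invr_ge0 //; apply: prodr_ge0 => t _.
- exact: (proj1 pX_pmf).
- exact: (proj1 pS_pmf).
- exact: (proj1 (W_channel _)).
Qed.

(* The rows of D^(1) are i.i.d., so the row permutation does not change the law of
   the noisy columns; the replication pattern [S] does not enter [F] at all. *)
Lemma Emodel_Ejoint F : Emodel F = Ejoint pX W F.
Proof.
pose unperm (Th : {perm 'I_m}) (ij : 'I_m * 'I_n) := ((Th^-1)%g ij.1, ij.2).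
have unperm_inj Th : injective (unperm Th).
  by move=> [i j] [i' j'] [/(congr1 Th)]; rewrite !permKV => -> ->.
have inner S Th : \sum_(D1 : data) \sum_(Yo : noise) model_weight D1 S Th Yo * F Yo =
    (\prod_j pS (S j)) * (m`!%:R)^-1 * Ejoint pX W F.
  rewrite /Ejoint -(Eprod_reindex (f := unperm Th) _ (unperm_inj Th)) //.
  rewrite /Eprod mulr_sumr; apply: eq_bigr => D1 _; rewrite !mulr_sumr.
  apply: eq_bigr => Yo _; rewrite /model_weight /noise_law.
  have -> : \prod_t W ([ffun ij => D1 (unperm Th ij)] (t.1.1, t.1.2)) (Yo t) =
            \prod_ijk W (D1 ((Th^-1)%g ijk.1.1, ijk.1.2)) (Yo ijk).
    by apply: eq_bigr => t _; rewrite ffunE.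
  by rewrite !mulrA; congr (_ * _ * _); rewrite -mulrA mulrC.
rewrite /Emodel exchange_big /=; under eq_bigr do rewrite exchange_big /=.
under eq_bigr do under eq_bigr do rewrite inner.
under eq_bigr do rewrite -mulr_suml.
rewrite -mulr_suml -[RHS]mul1r; congr (_ * _).
have fact_nz : (m`!%:R : R) != 0 by rewrite pnatr_eq0 -lt0n fact_gt0.
have inv_fact : (m`!%:R : R)^-1 *+ m`! = 1 by rewrite -[RHS](mulVf fact_nz) mulr_natr.
under eq_bigr do rewrite -mulr_sumr sumr_const card_Sn inv_fact mulr1.
rewrite -(bigA_distr_bigA (fun (j : 'I_n) (k : 'I_smax.+1) => pS k)) /=.
by apply: big1 => j _; exact: (proj2 pS_pmf).
Qed.

Lemma error_prob_le_Emodel tau : error_prob pX pS W m n tau <=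
  Emodel (fun Yo => \sum_(cc : ('I_n * 'I_smax) * ('I_n * 'I_smax))
                      (pair_error Yo tau cc.1 cc.2)%:R).
Proof.
apply: ler_sum => D1 _; apply: ler_sum => S _; apply: ler_sum => Th _.
apply: ler_sum => Yo _; have := some_error_le_sum S Yo tau.
case: (some_error S Yo tau) => /= bound; last by rewrite mulr_ge0 ?model_weight_ge0.
by rewrite -[X in X <= _]mulr1 ler_wpM2l ?model_weight_ge0.
Qed.

Lemma error_prob_ge0 tau : 0 <= error_prob pX pS W m n tau.
Proof.
by do 4![apply: sumr_ge0 => ? _]; case: (some_error _ _ _); rewrite ?model_weight_ge0.
Qed.

Lemma error_prob_le tau dl : (0 < m)%N -> 0 < dl ->
  p1 pX W + dl <= tau -> tau + dl <= p0 pX W ->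
  error_prob pX pS W m n tau <= ((n * smax) ^ 2)%:R / (m%:R * dl ^+ 2).
Proof.
move=> m_gt0 dl_gt0 p1_tau tau_p0.
apply: (le_trans (error_prob_le_Emodel tau)); rewrite Emodel_Ejoint Ejoint_sum //.
have -> : ((n * smax) ^ 2)%:R / (m%:R * dl ^+ 2) =
  \sum_(cc : ('I_n * 'I_smax) * ('I_n * 'I_smax)) (m%:R * dl ^+ 2)^-1 :> R.
  by rewrite sumr_const !card_prod !card_ord mulr_natl expnS expn1.
by apply: ler_sum => cc _; exact: Ejoint_pair_error.
Qed.
End Model.

Lemma cube_le_expR (R : realType) (x : R) : 0 <= x -> (x / 3%:R) ^+ 3 <= expR x.
Proof.
have x3 : x = 3%:R * (x / 3%:R) by rewrite mulrC divfK ?pnatr_eq0.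
move=> x_ge0; rewrite [X in expR X]x3 expRM_natl.
rewrite lerXn2r ?nnegrE ?divr_ge0 ?expR_ge0 //.
by apply: le_trans (expR_ge1Dx _); rewrite lerDr.
Qed.

Lemma sq_div_le_harmonic (R : realFieldType) (N M a : R) :
  1 <= N -> 0 < a -> (a * N / 3%:R) ^+ 3 <= M ->
  N ^+ 2 / M <= 54%:R / a ^+ 3 * (N + 1)^-1.
Proof.
move=> N_ge1 a_gt0 cube_le; have N_gt0 : 0 < N by lra.
have cube_gt0 : 0 < (a * N / 3%:R) ^+ 3 by rewrite exprn_gt0 ?divr_gt0 ?mulr_gt0.
apply: (@le_trans _ _ (N ^+ 2 / (a * N / 3%:R) ^+ 3)).
  by rewrite ler_wpM2l ?sqr_ge0 // lef_pV2 ?posrE // (lt_le_trans cube_gt0).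
have -> : N ^+ 2 / (a * N / 3%:R) ^+ 3 = 27%:R / a ^+ 3 * N^-1.
  by field; rewrite ?gt_eqF.
have -> : 54%:R / a ^+ 3 * (N + 1)^-1 = 27%:R / a ^+ 3 * (2%:R / (N + 1)).
  by field; rewrite ?gt_eqF ?addr_gt0.
apply: ler_wpM2l; first by rewrite divr_ge0 ?exprn_ge0 ?ltW.
rewrite ler_pdivlMr ?addr_gt0 //.
have : N^-1 <= 1 by rewrite invf_le1.
by rewrite mulrDr mulVf ?gt_eqF // mulr1; lra.
Qed.

Section ExponentialGrowth.
Variables (R : realType) (m : nat -> nat) (rate : R).
Hypotheses (rate_gt0 : 0 < rate)
  (ln_cvg : (fun n : nat => ln (m n)%:R / n%:R) @ \oo --> rate).

Let a := rate / 2%:R.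

Let a_gt0 : 0 < a. Proof. by rewrite divr_gt0. Qed.

Lemma growth_ln_gt : \forall n \near \oo, (1 <= n)%N /\ a * n%:R < ln (m n)%:R.
Proof.
near=> n; split; first by near: n; exact: nbhs_infty_ge.
rewrite -ltr_pdivlMr ?ltr0n; last by near: n; exact: nbhs_infty_gt.
by near: n; apply: (cvgr_gt rate ln_cvg); rewrite /a ltr_pdivrMr // ltr_pMr // ltr1n.
Unshelve. all: end_near.
Qed.

Lemma growth_cube_le : \forall n \near \oo, (1 <= n)%N /\ (a * n%:R / 3%:R) ^+ 3 <= (m n)%:R.
Proof.
apply: filterS growth_ln_gt => n [n_ge1 ln_gt]; split => //.
have an_gt0 : 0 < a * n%:R by rewrite mulr_gt0 ?ltr0n.
have m_gt1 : 1 < (m n)%:R :> R.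
  by rewrite ltNge; apply/negP => /ln_le0 ln_le0; have := lt_trans an_gt0 ln_gt; lra.
apply: le_trans (cube_le_expR (ltW an_gt0)) _.
by rewrite -[X in _ <= X](@lnK _ (m n)%:R) ?posrE ?(lt_trans ltr01) // ler_expR ltW.
Qed.

Lemma growth_gt0 : \forall n \near \oo, (0 < m n)%N.
Proof.
apply: filterS growth_cube_le => n [n_ge1 cube_le]; rewrite -(ltr0n R).
by apply: lt_le_trans cube_le; rewrite exprn_gt0 // !divr_gt0 ?mulr_gt0 ?ltr0n.
Qed.

Lemma growth_sq_cvg0 : (fun n => (n ^ 2)%:R / (m n)%:R) @ \oo --> (0 : R).
Proof.
apply: (squeeze_cvgr (f := fun=> 0) (h := fun n => 54%:R / a ^+ 3 * harmonic n));
  last 2 first.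
- exact: cvg_cst.
- by rewrite -(mulr0 (54%:R / a ^+ 3)); apply: cvgMl_tmp; exact: cvg_harmonic.
near=> n; have [n_ge1 cube_le] : (1 <= n)%N /\ (a * n%:R / 3%:R) ^+ 3 <= (m n)%:R.
  by near: n; exact: growth_cube_le.
rewrite divr_ge0 //= /harmonic /= -[n.+1%:R]natr1 natrX.
by apply: sq_div_le_harmonic; rewrite ?ler1n.
Unshelve. all: end_near.
Qed.
End ExponentialGrowth.

Theorem lemma1 (R : realType) (X Y : finType) (pX : X -> R) (smax : nat)
  (pS : 'I_smax.+1 -> R) (W : X -> Y -> R) (m : nat -> nat) :
  is_pmf pX -> is_pmf pS -> is_channel W ->
  (fun xy : X * Y => pX xy.1 * W xy.1 xy.2) <>
    (fun xy : X * Y => pX xy.1 * pY pX W xy.2) ->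
  (exists2 Rate : R, 0 < Rate &
     (fun n : nat => ln (m n)%:R / n%:R) @ \oo --> Rate) ->
  p1 pX W < p0 pX W /\
  (forall tau : R, p1 pX W < tau -> tau < p0 pX W ->
     (fun n : nat => error_prob pX pS W (m n) n tau) @ \oo --> 0).
Proof.
move=> pX_pmf pS_pmf W_channel dependent [rate rate_gt0 ln_cvg].
split=> [|tau p1_tau tau_p0]; first exact: p1_lt_p0.
pose dl := Num.min (tau - p1 pX W) (p0 pX W - tau).
have dl_gt0 : 0 < dl by rewrite lt_min !subr_gt0 p1_tau tau_p0.
have [dl_le1 dl_le0] : dl <= tau - p1 pX W /\ dl <= p0 pX W - tau.
  by rewrite !ge_min !lexx orbT.
pose C := (smax ^ 2)%:R / dl ^+ 2.
apply: (squeeze_cvgr (f := fun=> 0) (h := fun n => C * ((n ^ 2)%:R / (m n)%:R)));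
  last 2 first.
- exact: cvg_cst.
- by rewrite -(mulr0 C); apply: cvgMl_tmp; exact: growth_sq_cvg0 rate_gt0 ln_cvg.
near=> n; have m_gt0 : (0 < m n)%N by near: n; exact: growth_gt0 rate_gt0 ln_cvg.
rewrite error_prob_ge0 //=.
have -> : C * ((n ^ 2)%:R / (m n)%:R) = ((n * smax) ^ 2)%:R / ((m n)%:R * dl ^+ 2).
  by rewrite /C expnMn natrM; field; rewrite !gt_eqF ?ltr0n.
by apply: error_prob_le => //; lra.
Unshelve. all: end_near.
Qed.
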